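(* Let $P\in\mathrm{Sym}(n,\mathbb{R})$ be positive definite, $R\in\mathrm{Sym}(n,\mathbb{R})$, $Q\in\mathrm{Mat}(n,\mathbb{R})$, and for $\lambda\ge0$ let $B_\lambda=\begin{bmatrix}P^{-1}&-P^{-1}Q\\-Q^TP^{-1}&Q^TP^{-1}Q-R-\lambda I_n\end{bmatrix}$. Assume $JB_0$ is hyperbolic. Then for every $\lambda\ge0$ the spectral subspaces $V^+(JB_\lambda)$ and $V^-(JB_\lambda)$ are transversal to $L_D$, i.e. $V^\pm(JB_\lambda)\cap L_D=\{0\}$.
   Context: $J=\begin{bmatrix}0&-I_n\\ I_n&0\end{bmatrix}$; hyperbolic means no eigenvalue on the imaginary axis. $V^+(M)$ (resp. $V^-(M)$) is the real generalized eigenspace of $M$ for eigenvalues with positive (resp. negative) real part. $L_D=\mathbb{R}^n\times\{0\}\subset\mathbb{R}^{2n}$. *)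

From HB Require Import structures.
From mathcomp Require Import all_boot all_order all_algebra.
From mathcomp Require Import reals complex.
Set Implicit Arguments. Unset Strict Implicit. Unset Printing Implicit Defensive.
Import Order.TTheory GRing.Theory Num.Theory.
Local Open Scope ring_scope.

Section Defs.
Variable R : realType.

Definition cmx m p (M : 'M[R]_(m, p)) : 'M[R[i]]_(m, p) :=
  map_mx (fun x => (x%:C)%C) M.

Definition Jmx n : 'M[R]_(n + n) := block_mx 0 (- 1%:M) 1%:M 0.

Definition Bmx n (P Q Rm : 'M[R]_n) (lam : R) : 'M[R]_(n + n) :=
  block_mx (invmx P) (- (invmx P *m Q))
           (- (Q^T *m invmx P)) (Q^T *m invmx P *m Q - Rm - lam%:M).

Definition sym_mx n (A : 'M[R]_n) := A^T = A.

Definition posdef_mx n (A : 'M[R]_n) :=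
  sym_mx A /\ forall x : 'cV[R]_n, x != 0 -> 0 < (x^T *m A *m x) 0 0.

Definition hyperbolic m (M : 'M[R]_m) :=
  forall mu : R[i], eigenvalue (cmx M) mu -> complex.Re mu != 0.

Definition in_geneig m (M : 'M[R]_m) (mu : R[i]) (w : 'cV[R[i]]_m) :=
  (cmx M - mu%:M) ^+ m *m w = 0.

(* V^+(M) (sgn = true) / V^-(M) (sgn = false): the real generalized eigenspace
   of M for the eigenvalues with positive (resp. negative) real part, i.e. the
   real points of the sum of the complex generalized eigenspaces ker (M - mu)^m
   over such eigenvalues mu. *)
Definition Vspec (sgn : bool) m (M : 'M[R]_m) (v : 'cV[R]_m) :=
  exists s : seq (R[i] * 'cV[R[i]]_m),
    [/\ forall p, p \in s ->
          (if sgn then 0 < complex.Re p.1 else complex.Re p.1 < 0)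
          /\ in_geneig M p.1 p.2
      & cmx v = \sum_(p <- s) p.2].

Definition LD n (v : 'cV[R]_(n + n)) := exists x : 'cV[R]_n, v = col_mx x 0.

End Defs.

(* The Hamiltonian matrix H = J B (B symmetric) satisfies H^T J = -J H, so
   generalized eigenvectors of H whose eigenvalues do not sum to zero are
   J-orthogonal.  Since V^+(H) and V^-(H) are H-invariant and gathered from
   eigenvalues with real parts of one sign, the form w^T J H w = -w^T B w
   vanishes on them.  On L_D, however, (x,0)^T B (x,0) = x^T P^-1 x > 0 for
   x <> 0. *)
From HB Require Import structures.
From mathcomp Require Import all_boot all_order all_algebra.
From mathcomp Require Import reals complex.
From mathcomp Require Import lra.
Import Order.TTheory GRing.Theory Num.Theory.
Local Open Scope ring_scope.

Section HamiltonianGeneralizedEigenvectors.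
Context {F : fieldType} {m : nat} {J H : 'M[F]_m}.
Hypothesis HJ : H^T *m J = - (J *m H).

Lemma geneig_mulmx_stable {mu : F} {k} {u : 'cV_m} :
  (H - mu%:M) ^+ k *m u = 0 -> (H - mu%:M) ^+ k *m (H *m u) = 0.
Proof.
have commH : GRing.comm H (H - mu%:M).
  by rewrite /GRing.comm -!mulmxE mulmxBl mulmxBr scalar_mxC.
by move=> hu; rewrite mulmxA mulmxE -(commrX k commH) -mulmxE -mulmxA hu mulmx0.
Qed.

Lemma geneig_J_orthogonal {mu nu : F} {k l} {u v : 'cV_m} : mu + nu != 0 ->
  (H - mu%:M) ^+ k *m u = 0 -> (H - nu%:M) ^+ l *m v = 0 -> u^T *m J *m v = 0.
Proof.
move=> munu; elim: k l u v => [|k IHk] l u v hu hv.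
  by move: hu; rewrite expr0 mul1mx => ->; rewrite trmx0 !mul0mx.
elim: l v hv => [|l IHl] v hv.
  by move: hv; rewrite expr0 mul1mx => ->; rewrite mulmx0.
set u1 := (H - mu%:M) *m u; set v1 := (H - nu%:M) *m v.
have hu1 : (H - mu%:M) ^+ k *m u1 = 0 by rewrite /u1 mulmxA mulmxE -exprSr.
have hv1 : (H - nu%:M) ^+ l *m v1 = 0 by rewrite /v1 mulmxA mulmxE -exprSr.
have Hu : H *m u = mu *: u + u1 by rewrite /u1 mulmxBl mul_scalar_mx addrC subrK.
have Hv : H *m v = nu *: v + v1 by rewrite /v1 mulmxBl mul_scalar_mx addrC subrK.
(* (H u)^T J v is mu (u^T J v) by induction on k, and -nu (u^T J v) after
   moving H across J, by induction on l. *)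
have left_mu : (H *m u)^T *m J *m v = mu *: (u^T *m J *m v).
  rewrite Hu linearD /= linearZ /= !mulmxDl (IHk _ _ _ hu1 hv) addr0.
  by rewrite -!scalemxAl.
have right_nu : (H *m u)^T *m J *m v = - nu *: (u^T *m J *m v).
  rewrite trmx_mul -[u^T *m H^T *m J]mulmxA HJ mulmxN mulNmx -!mulmxA Hv.
  rewrite !mulmxDr !mulmxA -[_ *m (H - nu%:M) *m v]mulmxA -/v1 (IHl _ hv1).
  by rewrite addr0 -scalemxAr scaleNr.
have : (mu + nu) *: (u^T *m J *m v) = 0.
  by rewrite scalerDl -[nu]opprK scaleNr -right_nu left_mu subrr.
by move/eqP; rewrite scaler_eq0 (negPf munu) => /eqP.
Qed.

Lemma sum_geneig_JH_isotropic (s : seq (F * 'cV[F]_m)) :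
  (forall p, p \in s -> (H - p.1%:M) ^+ m *m p.2 = 0) ->
  {in s &, forall p q, p.1 + q.1 != 0} ->
  let w := \sum_(p <- s) p.2 in w^T *m (J *m H) *m w = 0.
Proof.
move=> geneig sum_neq0 /=.
rewrite mulmx_sumr big_seq big1 // => q qs.
rewrite raddf_sum /= !mulmx_suml big_seq big1 // => p ps.
rewrite mulmxA -mulmxA.
exact: (geneig_J_orthogonal (sum_neq0 p q ps qs) (geneig p ps)
          (geneig_mulmx_stable (geneig q qs))).
Qed.

End HamiltonianGeneralizedEigenvectors.

Section Complexification.
Context {R : realType}.

Lemma cmx_mul m n p (A : 'M[R]_(m, n)) (B : 'M[R]_(n, p)) :
  cmx (A *m B) = cmx A *m cmx B.
Proof. exact: map_mxM. Qed.

Lemma cmx_tr m n (A : 'M[R]_(m, n)) : cmx A^T = (cmx A)^T.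
Proof. by rewrite /cmx map_trmx. Qed.

Lemma cmx_opp m n (A : 'M[R]_(m, n)) : cmx (- A) = - cmx A.
Proof. exact: map_mxN. Qed.

Lemma cmx_eq0 m n (A : 'M[R]_(m, n)) : cmx A = 0 -> A = 0.
Proof. by move=> A0; apply: (map_mx_inj (f := real_complex R)); rewrite map_mx0. Qed.

Lemma Vspec_JH_isotropic {sgn : bool} {m} {J H : 'M[R]_m} {v : 'cV[R]_m} :
  H^T *m J = - (J *m H) -> Vspec sgn H v -> v^T *m (J *m H) *m v = 0.
Proof.
move=> HJ [s [geneig_s v_sum]]; apply: cmx_eq0.
rewrite !cmx_mul cmx_tr v_sum.
apply: sum_geneig_JH_isotropic.
- by rewrite -cmx_tr -!cmx_mul HJ cmx_opp cmx_mul.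
- by move=> p /geneig_s [].
move=> [mu u] [nu w] /geneig_s [sgn_mu _] /geneig_s [sgn_nu _] /=.
apply/eqP => /(congr1 (@complex.Re R)); move: sgn_mu sgn_nu.
by case: mu nu => [a b] [c d] /=; case: (sgn) => /= ? ?; lra.
Qed.

End Complexification.

Section SymplecticStructure.
Context {R : realType} {n : nat}.
Local Notation J := (Jmx R n).

Lemma Jmx_mulJ : J *m J = - 1%:M.
Proof.
rewrite /Jmx mulmx_block !mulmx0 !mul0mx !addr0 !add0r mulmx1 mulmxN mulmx1.
by rewrite [in RHS](scalar_mx_block n n) opp_block_mx !oppr0.
Qed.

Lemma tr_Jmx : J^T = - J.
Proof.
rewrite /Jmx tr_block_mx !trmx0 tr_scalar_mx linearN /= tr_scalar_mx.
by rewrite opp_block_mx !oppr0 opprK.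
Qed.

Lemma Jmx_sym_hamiltonian {S : 'M[R]_(n + n)} :
  sym_mx S -> (J *m S)^T *m J = - (J *m (J *m S)).
Proof.
move=> Ssym; rewrite trmx_mul Ssym tr_Jmx mulmxN mulNmx -mulmxA Jmx_mulJ.
by rewrite mulmxA Jmx_mulJ mulmxN mulNmx mulmx1 mul1mx opprK.
Qed.

Lemma sym_Bmx (P Q Rm : 'M[R]_n) lam :
  sym_mx P -> sym_mx Rm -> sym_mx (Bmx P Q Rm lam).
Proof.
rewrite /sym_mx /Bmx => Psym Rsym; rewrite tr_block_mx !raddfN /= !raddfB /=.
by rewrite !trmx_mul !trmx_inv Psym Rsym trmxK tr_scalar_mx !mulmxA.
Qed.

Lemma Bmx_quad_LD (P Q Rm : 'M[R]_n) lam (x : 'cV[R]_n) :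
  (col_mx x 0)^T *m Bmx P Q Rm lam *m col_mx x 0 = x^T *m invmx P *m x.
Proof.
rewrite /Bmx tr_col_mx mul_row_block trmx0 !mul0mx !addr0 mul_row_col.
by rewrite mulmx0 addr0.
Qed.

Lemma posdef_invmx {P : 'M[R]_n} : posdef_mx P -> posdef_mx (invmx P).
Proof.
move=> [Psym Ppos]; split; first by rewrite /sym_mx trmx_inv Psym.
move=> x x_neq0; have [Punit|Pnot_unit] := boolP (P \in unitmx); last first.
  by rewrite invmx_out //; apply: Ppos.
set y := invmx P *m x.
have xE : x = P *m y by rewrite /y mulKVmx.
have y_neq0 : y != 0 by apply: contraNneq x_neq0 => y0; rewrite xE y0 mulmx0.
rewrite -mulmxA -/y {1}xE trmx_mul Psym; exact: Ppos.
Qed.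

End SymplecticStructure.

Theorem lemma4p1 (R : realType) (n : nat) (P Q Rm : 'M[R]_n) :
  posdef_mx P -> sym_mx Rm ->
  hyperbolic (Jmx R n *m Bmx P Q Rm 0) ->
  forall lam : R, 0 <= lam ->
  forall sgn : bool, forall v : 'cV[R]_(n + n),
    Vspec sgn (Jmx R n *m Bmx P Q Rm lam) v -> LD v -> v = 0.
Proof.
move=> Ppos Rsym _ lam _ sgn v Vv [x vE].
have Bsym := sym_Bmx P Q Rm lam Ppos.1 Rsym.
have := Vspec_JH_isotropic (Jmx_sym_hamiltonian Bsym) Vv.
rewrite (mulmxA (Jmx R n)) Jmx_mulJ mulNmx mul1mx mulmxN mulNmx vE Bmx_quad_LD.
move=> /eqP; rewrite oppr_eq0 => /eqP quad0.
have [x0|x_neq0] := eqVneq x 0; first by rewrite x0 col_mx0.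
have := (posdef_invmx Ppos).2 x x_neq0.
by rewrite quad0 mxE ltxx.
Qed.
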